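(* For all integers $n\ge0$ and $p\ge1$, $$\mathcal{B}_{n,p}=p\int_0^1(1-t)^{p-1}\phi_n(t)\,dt.$$
   Context: $S(n,k)$ denotes the Stirling numbers of the second kind and $\phi_n(t)=\sum_{k=0}^nS(n,k)t^k$ the Bell (exponential) polynomials. For an integer $p\ge0$, the $p$-Bell numbers $\mathcal{B}_{n,p}$ are defined by $\sum_{n\ge0}\mathcal{B}_{n,p}\frac{z^n}{n!}=\sum_{n\ge0}\binom{n+p}{p}^{-1}\frac{(e^z-1)^n}{n!}$. *)

From HB Require Import structures.
From mathcomp Require Import all_boot all_order all_algebra.
From mathcomp Require Import all_classical all_reals all_analysis.
Set Implicit Arguments. Unset Strict Implicit. Unset Printing Implicit Defensive.
Import Order.TTheory GRing.Theory Num.Theory.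
Local Open Scope ring_scope.

Fixpoint stirling2 (n k : nat) : nat :=
  match n, k with
  | 0, 0 => 1
  | 0, _.+1 => 0
  | _.+1, 0 => 0
  | n'.+1, k'.+1 => (k'.+1 * stirling2 n' k'.+1 + stirling2 n' k')%N
  end.

Definition bell_poly (R : nzRingType) (n : nat) (t : R) : R :=
  \sum_(k < n.+1) (stirling2 n k)%:R * t ^+ k.

Definition exp_trunc (R : fieldType) (n : nat) : {poly R} :=
  \sum_(j < n.+1) (j`!%:R)^-1 *: 'X^j.

(* p-Bell numbers: B_{n,p} = n! [z^n] sum_{k>=0} C(k+p,p)^{-1} (e^z-1)^k / k!.
   Since (e^z - 1)^k has z-adic valuation k, only k <= n contribute to [z^n],
   and the coefficient of z^n is unaffected by truncating e^z at degree n. *)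
Definition pBell (R : fieldType) (n p : nat) : R :=
  n`!%:R * (\sum_(k < n.+1)
              (('C(k + p, p)%:R)^-1 * (k`!%:R)^-1) *: (exp_trunc R n - 1) ^+ k)`_n.

(* Expanding phi_n and integrating termwise with the Beta integral
   p * int_0^1 t^k (1-t)^(p-1) dt = 1 / C(k+p, p) reduces the claim to
   B_{n,p} = sum_k S(n,k) / C(k+p, p).  This in turn is the classical
   n! [z^n] (e^z - 1)^k = k! S(n,k), proved for the truncation E_n of e^z by
   differentiating (E_n - 1)^(k+1): below degree n, E_n' coincides with
   E_n = (E_n - 1) + 1, which turns the derivative into the recurrence
   S(m+1,k+1) = (k+1) S(m,k+1) + S(m,k). *)

From HB Require Import structures.
From mathcomp Require Import all_boot all_order all_algebra.
From mathcomp Require Import all_classical all_reals all_analysis.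
From mathcomp Require Import beta_distribution ring.
Import Order.TTheory GRing.Theory Num.Theory.
Local Open Scope ring_scope.

Section ExpTrunc.
Variables (R : numFieldType) (n : nat).
Local Notation E := (exp_trunc R n).

Lemma coef_exp_trunc i : E`_i = if (i <= n)%N then (i`!%:R)^-1 else 0.
Proof. by rewrite /exp_trunc -(poly_def n.+1 (fun j => (j`!%:R)^-1)) coef_poly ltnS. Qed.

Lemma coef0_exp_trunc_sub1 : (E - 1)`_0 = 0.
Proof. by rewrite coefB coef_exp_trunc coef1 /= fact0 invr1 subrr. Qed.

Lemma coef_deriv_exp_trunc i : (i < n)%N -> E^`()`_i = E`_i.
Proof.
move=> lt_in; rewrite coef_deriv !coef_exp_trunc lt_in ltnW //.
by rewrite factS natrM invfM mulrC -mulrnAr -[_^-1 *+ _]mulr_natl divff ?mulr1 ?pnatr_eq0.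
Qed.

Lemma coef_deriv_exp_trunc_sub1X k m : (m < n)%N ->
  ((E - 1) ^+ k.+1)^`()`_m = (((E - 1) ^+ k.+1)`_m + ((E - 1) ^+ k)`_m) *+ k.+1.
Proof.
move=> lt_mn; rewrite deriv_exp coefMn /=; congr (_ *+ _).
have -> : (E - 1) ^+ k.+1 = E * (E - 1) ^+ k - (E - 1) ^+ k.
  by rewrite exprS mulrBl mul1r.
rewrite coefB subrK !coefM; apply: eq_bigr => j _; congr (_ * _).
rewrite derivB -polyC1 derivC subr0 coef_deriv_exp_trunc //.
exact: leq_trans (ltn_ord j) lt_mn.
Qed.

Lemma fact_coef_exp_trunc_sub1X k m : (m <= n)%N ->
  m`!%:R * ((E - 1) ^+ k)`_m = (k`! * stirling2 m k)%:R.
Proof.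
elim: m k => [|m IHm] [|k] bound_m.
- by rewrite expr0 coef1 mul1r.
- by rewrite exprSr coefM big_ord1 coef0_exp_trunc_sub1 !mulr0 muln0.
- by rewrite expr0 coef1 mulr0 muln0.
have le_mn : (m <= n)%N := ltnW bound_m.
have -> (x : R) : (m.+1)`!%:R * x = m`!%:R * (x *+ m.+1).
  by rewrite -[x *+ _]mulr_natr factS natrM; ring.
rewrite -coef_deriv coef_deriv_exp_trunc_sub1X // mulrnAr mulrDr !IHm //.
rewrite -natrD -mulr_natr -natrM /= !factS; congr _%:R; ring.
Qed.

End ExpTrunc.

Lemma pBell_stirling2 (R : numFieldType) n p :
  pBell R n p = \sum_(k < n.+1) (stirling2 n k)%:R / ('C(k + p, p))%:R.
Proof.
rewrite /pBell coef_sum mulr_sumr; apply: eq_bigr => k _.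
rewrite coefZ mulrCA fact_coef_exp_trunc_sub1X // natrM mulrA mulfVK; first exact: mulrC.
by rewrite pnatr_eq0 -lt0n fact_gt0.
Qed.

Local Open Scope classical_set_scope.

Lemma Rintegral_sum d (T : measurableType d) (R : realType)
    (mu : {measure set T -> \bar R}) (D : set T) (I : Type) (s : seq I)
    (f : I -> T -> R) :
  measurable D -> (forall i, mu.-integrable D (EFin \o f i)) ->
  \int[mu]_(x in D) (\sum_(i <- s) f i x) = \sum_(i <- s) \int[mu]_(x in D) f i x.
Proof.
move=> mD intf; elim: s => [|i s IHs].
  by under eq_Rintegral do rewrite big_nil; rewrite big_nil Rintegral_cst // mul0r.
under eq_Rintegral do rewrite big_cons.
have ints : mu.-integrable D (EFin \o fun x => \sum_(j <- s) f j x).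
  apply: eq_integrable (integrable_sum mD s (fun j _ => intf j)) => // x _.
  by rewrite /= sumEFin.
by rewrite RintegralD // IHs big_cons.
Qed.

Section BetaIntegral.
Variable R : realType.
Local Notation mu := (@lebesgue_measure R).

Lemma Rintegral_XMonemX a b :
  \int[mu]_(x in `[0%R, 1%R]) XMonemX a b x = (a`! * b`!)%:R / (a + b).+1`!%:R.
Proof. by rewrite Rintegral_mkcond -beta_fun_fact. Qed.

Lemma Rintegral_XMonemX_binom k p :
  p.+1%:R * \int[mu]_(x in `[0%R, 1%R]) XMonemX k p x = ('C(k + p.+1, p.+1)%:R)^-1.
Proof.
have := bin_fact (leq_addl k p.+1); rewrite addnK addnS => binE.
rewrite Rintegral_XMonemX -binE !natrM; field.
by rewrite nat1r !pnatr_eq0 -!lt0n bin_gt0 ltnS leq_addl !fact_gt0.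
Qed.

End BetaIntegral.

Theorem mainTheorem19 (R : realType) (n p : nat) (hp : (1 <= p)%N) :
  pBell R n p =
  p%:R * Rintegral (@lebesgue_measure R) `[0%R, 1%R]
           (fun t : R => (1 - t) ^+ (p - 1) * bell_poly n t).
Proof.
case: p hp => // p _; rewrite subn1 /= pBell_stirling2.
have -> : (fun t : R => (1 - t) ^+ p * bell_poly n t) =
    (fun t => \sum_(k < n.+1) (stirling2 n k)%:R * XMonemX k p t).
  apply/funext => t; rewrite /bell_poly mulr_sumr; apply: eq_bigr => k _.
  by rewrite /XMonemX mulrCA; congr (_ * _); exact: mulrC.
rewrite Rintegral_sum // => [|k]; last first.
  exact: eq_integrable (integrableZl _ _ (integrable_XMonemX k p)).
rewrite mulr_sumr; apply: eq_bigr => k _.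
by rewrite RintegralZl ?integrable_XMonemX // mulrCA Rintegral_XMonemX_binom.
Qed.
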